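(* Let $G$ be a finite simple graph on the vertex set $\{x_1,\ldots,x_n\}$, $n\ge 1$, and let $NI(G)\subseteq R=\mathbf{k}[x_1,\ldots,x_n]$ be its closed neighborhood ideal. Then $\operatorname{pd}(R/NI(G))\geq \gamma'_G$.
   Context: $\mathbf{k}$ is a field and vertices are identified with variables. $N[x_i]=\{x_i\}\cup\{x_j:\{x_i,x_j\}\in E(G)\}$, and $NI(G)=\langle \prod_{x_j\in N[x_i]}x_j : x_i\in V(G)\rangle$. A dominating set is a set $S\subseteq V(G)$ with $S\cap N[x]\ne\emptyset$ for all vertices $x$; it is minimal if no proper subset is dominating. $\gamma'_G$ is the maximum size of a minimal dominating set of $G$. *)

From HB Require Import structures.
From mathcomp Require Import all_boot all_order all_algebra.
From mathcomp Require Import mpoly.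
Set Implicit Arguments. Unset Strict Implicit. Unset Printing Implicit Defensive.
Import Order.TTheory GRing.Theory.
Local Open Scope ring_scope.

(* A finite simple graph on vertices 'I_n (vertex i <-> variable x_(i+1)):
   a symmetric irreflexive relation. *)
Definition simple_graph (n : nat) (e : rel 'I_n) : Prop :=
  ssrbool.symmetric e /\ ssrbool.irreflexive e.

Definition closed_nbhd (n : nat) (e : rel 'I_n) (x : 'I_n) : {set 'I_n} :=
  [set y | (y == x) || e x y].

Definition dominating (n : nat) (e : rel 'I_n) (S : {set 'I_n}) : bool :=
  [forall x, S :&: closed_nbhd e x != set0].

Definition minimal_dominating (n : nat) (e : rel 'I_n) (S : {set 'I_n}) : bool :=
  dominating e S && [forall T : {set 'I_n}, (T \proper S) ==> ~~ dominating e T].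

Definition gamma' (n : nat) (e : rel 'I_n) : nat :=
  \max_(S : {set 'I_n} | minimal_dominating e S) #|S|.

Definition nbhd_monomial (k : fieldType) (n : nat) (e : rel 'I_n) (i : 'I_n)
  : {mpoly k[n]} := \prod_(j in closed_nbhd e i) 'X_j.

Definition in_ideal_gen (R : comRingType) (m : nat) (g : 'I_m -> R) (f : R) : Prop :=
  exists c : 'I_m -> R, f = \sum_(i < m) c i * g i.

Definition in_NI (k : fieldType) (n : nat) (e : rel 'I_n) (f : {mpoly k[n]}) : Prop :=
  in_ideal_gen (nbhd_monomial k e) f.

(* A finite free resolution of R/I of length p over R:
     0 -> F_p -> ... -> F_1 -> F_0 -> R/I -> 0,   F_i = R^(b i),
   maps acting on row vectors: d i : F_(i+1) -> F_i is v |-> v *m d i,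
   F_0 -> R/I is v |-> (v *m aug) mod I (aug a column of lifts in R).
   We require b j = 0 for j > p, exactness at every F_i, and surjectivity
   onto R/I.  (Exactness at F_p with F_(p+1) = 0 is injectivity of d (p-1).) *)
Definition free_resolution_of_length (R : comRingType) (I : R -> Prop) (p : nat)
  : Prop :=
  exists (b : nat -> nat) (d : forall i : nat, 'M[R]_(b i.+1, b i))
         (aug : 'cV[R]_(b 0)),
    [/\ (forall j, p < j -> b j = 0)%N,
        (exists v : 'rV[R]_(b 0), I ((v *m aug) 0 0 - 1)),
        (forall v : 'rV[R]_(b 0),
            I ((v *m aug) 0 0) <-> exists w : 'rV[R]_(b 1), v = w *m d 0) &
        (forall (i : nat) (v : 'rV[R]_(b i.+1)),
            v *m d i = 0 <-> exists w : 'rV[R]_(b i.+2), v = w *m d i.+1)].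

From HB Require Import structures.
From mathcomp Require Import all_boot all_order all_algebra.
From mathcomp Require Import mpoly.

(* If S is a minimal dominating set, the monomial u = prod_(j \notin S) x_j
   is not in NI(G), because every closed neighbourhood meets S; but x_s u is
   in NI(G) for each s in S, because S \ {s} misses some N[x], which is then
   contained in {s} together with the complement of S.  So the class of u in
   R/NI(G) is a nonzero element killed by the regular sequence (x_s)_(s in S),
   and such an element forces F_|S| <> 0 in any free resolution F.  The latter
   is proved by induction on the sequence: passing from Q to Q + yR, with y
   regular on R/Q, and from F to F shifted by one keeps F (x) R/Q exact in
   positive degrees and carries the killed nonzero class along. *)

Set Implicit Arguments. Unset Strict Implicit. Unset Printing Implicit Defensive.
Import GRing.Theory.
Local Open Scope ring_scope.

Section IdealPredicates.

Variable R : comPzRingType.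
Implicit Types (Q : R -> Prop) (y : R).

Record is_ideal (Q : R -> Prop) := IsIdeal {
  ideal0 : Q 0;
  idealD : forall a b, Q a -> Q b -> Q (a + b);
  idealMl : forall a b, Q b -> Q (a * b) }.

Definition add_principal (Q : R -> Prop) (y : R) (r : R) : Prop :=
  exists a, Q (r - y * a).

Definition regular_mod (Q : R -> Prop) (y : R) : Prop :=
  forall r, Q (y * r) -> Q r.

Fixpoint regular_seq (Q : R -> Prop) (ys : seq R) : Prop :=
  if ys is y :: ys' then regular_mod Q y /\ regular_seq (add_principal Q y) ys'
  else True.

Definition row_in (Q : R -> Prop) k (v : 'rV[R]_k) : Prop := forall j, Q (v 0 j).

Lemma row_in_eq0 k (v : 'rV[R]_k) : row_in (fun r => r = 0) v <-> v = 0.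
Proof.
split=> [v0|-> j]; last by rewrite mxE.
by apply/rowP => j; rewrite mxE v0.
Qed.

Lemma row_in_add_principalP Q y k (x : 'rV[R]_k) :
  row_in (add_principal Q y) x <-> exists z : 'rV_k, row_in Q (x - y *: z).
Proof.
split=> [Qx | [z Qz] j]; last by exists (z 0 j); have := Qz j; rewrite !mxE.
have /fin_all_exists[a Qa] := Qx.
by exists (\row_j a j) => j; rewrite !mxE.
Qed.

Lemma row_in_regular Q y k (x : 'rV[R]_k) :
  regular_mod Q y -> row_in Q (y *: x) -> row_in Q x.
Proof. by move=> yreg Qyx j; apply: yreg; have := Qyx j; rewrite mxE. Qed.

Variable Q : R -> Prop.
Hypothesis idealQ : is_ideal Q.

Lemma idealN a : Q a -> Q (- a).
Proof. by move=> Qa; rewrite -mulN1r; apply: (idealMl idealQ). Qed.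

Lemma is_ideal_add_principal y : is_ideal (add_principal Q y).
Proof.
split.
- by exists 0; rewrite mulr0 subr0; apply: (ideal0 idealQ).
- move=> a b [c Qc] [d Qd]; exists (c + d).
  by rewrite mulrDr opprD addrACA; apply: (idealD idealQ).
- by move=> a b [c Qc]; exists (a * c); rewrite mulrCA -mulrBr; apply: (idealMl idealQ).
Qed.

Lemma row_inD k (v w : 'rV_k) : row_in Q v -> row_in Q w -> row_in Q (v + w).
Proof. by move=> Qv Qw j; rewrite mxE; apply: (idealD idealQ). Qed.

Lemma row_inN k (v : 'rV_k) : row_in Q v -> row_in Q (- v).
Proof. by move=> Qv j; rewrite mxE; apply: idealN. Qed.

Lemma row_inB k (v w : 'rV_k) : row_in Q v -> row_in Q w -> row_in Q (v - w).
Proof. by move=> Qv Qw; apply: row_inD => //; apply: row_inN. Qed.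

Lemma row_inZ k a (v : 'rV_k) : row_in Q v -> row_in Q (a *: v).
Proof. by move=> Qv j; rewrite mxE; apply: (idealMl idealQ). Qed.

Lemma row_inM k l (v : 'rV_k) (M : 'M_(k, l)) : row_in Q v -> row_in Q (v *m M).
Proof.
move=> Qv j; rewrite mxE; apply: (big_ind Q (ideal0 idealQ) (idealD idealQ)) => i _.
by rewrite mulrC; apply: (idealMl idealQ).
Qed.

End IdealPredicates.

Section ComplexModIdeal.
Variable R : comPzRingType.
Implicit Types (Q : R -> Prop) (b : nat -> nat).

Definition is_complex b (d : forall i, 'M[R]_(b i.+1, b i)) : Prop :=
  forall i (w : 'rV_(b i.+2)), w *m d i.+1 *m d i = 0.

(* [F (x) R/Q] is exact in positive degrees. *)
Definition acyclic_mod Q b (d : forall i, 'M[R]_(b i.+1, b i)) : Prop :=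
  forall i (v : 'rV_(b i.+1)), row_in Q (v *m d i) ->
    exists w : 'rV_(b i.+2), row_in Q (v - w *m d i.+1).

(* The class of [u] vanishes in [H_0(F (x) R/Q)]. *)
Definition boundary_mod Q b (d : forall i, 'M[R]_(b i.+1, b i)) (u : 'rV_(b 0)) :=
  exists w : 'rV_(b 1), row_in Q (u - w *m d 0).

Section Shift.
Variables (Q : R -> Prop) (y : R) (b : nat -> nat) (d : forall i, 'M[R]_(b i.+1, b i)).
Hypotheses (idealQ : is_ideal Q) (yreg : regular_mod Q y).
Hypotheses (dd0 : is_complex d) (acyclic : acyclic_mod Q d).

Let b' i := b i.+1.
Let d' i : 'M[R]_(b' i.+1, b' i) := d i.+1.

Lemma acyclic_mod_shift : acyclic_mod (add_principal Q y) d'.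
Proof.
move=> i v /row_in_add_principalP[z Qvz].
have Qzd : row_in Q (z *m d i).
  apply: (row_in_regular yreg); rewrite scalemxAl.
  have -> : (y *: z) *m d i = - ((v *m d i.+1 - y *: z) *m d i).
    by rewrite mulmxBl dd0 sub0r opprK.
  by apply: (row_inN idealQ); apply: (row_inM idealQ).
have [t Qzt] := acyclic Qzd.
have [s Qs] : exists s : 'rV_(b i.+3), row_in Q ((v - y *: t) - s *m d i.+2).
  apply: acyclic; have -> : (v - y *: t) *m d i.+1 =
      (v *m d i.+1 - y *: z) + y *: (z - t *m d i.+1).
    by rewrite mulmxBl -scalemxAl scalerBr addrA subrK.
  by apply: (row_inD idealQ) => //; apply: (row_inZ idealQ).
by exists s; apply/row_in_add_principalP; exists t; rewrite addrAC.
Qed.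

Variables (u : 'rV[R]_(b 0)) (w : 'rV[R]_(b 1)).
Hypothesis Qyu : row_in Q (y *: u - w *m d 0).

Lemma boundary_mod_shift y' :
  boundary_mod Q d (y' *: u) -> boundary_mod (add_principal Q y) d' (y' *: w).
Proof.
case=> w' Qw'.
have [t Qt] : exists t : 'rV_(b 2), row_in Q ((y' *: w - y *: w') - t *m d 1).
  apply: acyclic; have -> : (y' *: w - y *: w') *m d 0 =
      y *: (y' *: u - w' *m d 0) - y' *: (y *: u - w *m d 0).
    rewrite mulmxBl -!scalemxAl !scalerBr !scalerA mulrC.
    by rewrite opprB [RHS]addrC addrA subrK.
  by apply: (row_inB idealQ); apply: (row_inZ idealQ).
by exists t; apply/row_in_add_principalP; exists w'; rewrite addrAC.
Qed.

Lemma boundary_mod_unshift :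
  boundary_mod (add_principal Q y) d' w -> boundary_mod Q d u.
Proof.
case=> t /row_in_add_principalP[z Qz]; exists z.
apply: (row_in_regular yreg).
have -> : y *: (u - z *m d 0) = (y *: u - w *m d 0) + (w - t *m d 1 - y *: z) *m d 0.
  by rewrite !mulmxBl dd0 subr0 -scalemxAl scalerBr addrA subrK.
by apply: (row_inD idealQ) => //; apply: (row_inM idealQ).
Qed.

End Shift.

Lemma regular_seq_boundary_length Q (ys : seq R) b (d : forall i, 'M[R]_(b i.+1, b i))
    (u : 'rV_(b 0)) :
  is_ideal Q -> regular_seq Q ys -> is_complex d -> acyclic_mod Q d ->
  (forall y, y \in ys -> boundary_mod Q d (y *: u)) -> ~ boundary_mod Q d u ->
  (0 < b (size ys))%N.
Proof.
elim: ys Q b d u => [|y ys IH] Q b d u idealQ /=.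
  move=> _ _ _ _ nbd; rewrite lt0n; apply/negP => /eqP b0.
  by apply: nbd; exists 0 => -[j j_lt]; exfalso; rewrite b0 in j_lt.
case=> yreg ysreg dd0 acyclic ysu nbd.
have [w Qw] := ysu y (mem_head _ _).
apply: (IH _ (fun i => b i.+1) (fun i => d i.+1) w
         (is_ideal_add_principal idealQ y) ysreg).
- by move=> i; apply: dd0.
- exact: acyclic_mod_shift.
- by move=> y' y'ys; apply: boundary_mod_shift => //; apply: ysu; rewrite inE y'ys orbT.
- by move/(boundary_mod_unshift idealQ yreg dd0 Qw).
Qed.

End ComplexModIdeal.

Section Resolution.
Variable R : comPzRingType.

Lemma is_ideal_eq0 : is_ideal (fun r : R => r = 0).
Proof. by split=> [|a b -> ->|a b ->]; rewrite ?addr0 ?mulr0. Qed.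

Lemma resolution_length_regular_seq (ys : seq R) b (d : forall i, 'M[R]_(b i.+1, b i))
    (u : 'rV_(b 0)) :
  regular_seq (fun r => r = 0) ys ->
  (forall i (v : 'rV_(b i.+1)), v *m d i = 0 <-> exists w, v = w *m d i.+1) ->
  (forall y, y \in ys -> exists w, y *: u = w *m d 0) -> ~ (exists w, u = w *m d 0) ->
  (0 < b (size ys))%N.
Proof.
have boundaryE v : boundary_mod (fun r => r = 0) d v <-> exists w, v = w *m d 0.
  split=> -[w]; last by move=> ->; exists w; apply/row_in_eq0; rewrite subrr.
  by move/row_in_eq0/eqP; rewrite subr_eq0 => /eqP ->; exists w.
move=> ysreg exact ysu nbd.
apply: (regular_seq_boundary_length (u := u) is_ideal_eq0 ysreg).
- by move=> i w; apply/exact; exists w.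
- by move=> i v /row_in_eq0/exact[w ->]; exists w; apply/row_in_eq0; rewrite subrr.
- by move=> y /ysu/boundaryE.
- by move/boundaryE.
Qed.

Variables (I : R -> Prop) (b0 b1 : nat) (d0 : 'M[R]_(b1, b0)) (aug : 'cV[R]_b0).
Variable v0 : 'rV[R]_b0.
Hypotheses (idealI : is_ideal I) (v0_lift1 : I ((v0 *m aug) 0 0 - 1)).
Hypothesis exact0 : forall v : 'rV_b0, I ((v *m aug) 0 0) <-> exists w, v = w *m d0.

Lemma boundary_scale_liftP r : (exists w, r *: v0 = w *m d0) <-> I r.
Proof.
rewrite -exact0 -scalemxAl mxE; set t := (v0 *m aug) 0 0.
split=> [Irt | Ir]; last by rewrite mulrC; apply: (idealMl idealI).
have -> : r = r * t + - (r * (t - 1)) by rewrite mulrBr mulr1 opprB addrC subrK.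
by apply: (idealD idealI) => //; apply: (idealN idealI); apply: (idealMl idealI).
Qed.

End Resolution.

Section VariableIdeal.
Variables (R : comNzRingType) (n : nat).
Implicit Types (A : {set 'I_n}) (p : {mpoly R[n]}) (m : 'X_{1..n}).

(* The ideal generated by the variables [x_a], [a \in A]: no monomial of [p]
   avoids [A]. *)
Definition in_var_ideal A p : Prop :=
  forall m, (forall a, a \in A -> m a = 0%N) -> p@_m = 0.

Lemma mcoeffMX_eq0 p m m' : ~~ (m <= m')%MM -> (p * 'X_[m])@_m' = 0.
Proof.
apply: contraNeq; rewrite -mcoeff_msupp (perm_mem (msuppMX p m)).
by case/mapP=> m'' _ ->; apply: lem_addr.
Qed.

Lemma is_ideal_var_ideal A : is_ideal (in_var_ideal A).
Proof.
split=> [m _ | p q Ip Iq m mA | p q Iq m mA]; first by rewrite mcoeff0.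
  by rewrite mcoeffD Ip ?Iq ?addr0.
rewrite mcoeffM big1 // => -[m1 m2] /= /eqP m_split.
rewrite Iq ?mulr0 // => a aA.
have /= := congr1 (fun m' : 'X_{1..n} => m' a) m_split.
by rewrite mnmDE mA // => /esym/eqP; rewrite addn_eq0 => /andP[_ /eqP].
Qed.

Lemma in_var_ideal0 p : in_var_ideal set0 p <-> p = 0.
Proof.
split=> [Ip | -> m _]; last by rewrite mcoeff0.
by apply/mpolyP => m; rewrite mcoeff0 Ip // => a; rewrite inE.
Qed.

Lemma in_var_idealXM i A p : i \in A -> in_var_ideal A ('X_i * p).
Proof.
move=> iA m mA; rewrite mulrC mcoeffMX_eq0 //.
by apply/negP => /mnm_lepP/(_ i); rewrite mnm1E eqxx mA.
Qed.

Lemma regular_mod_var_ideal i A : i \notin A -> regular_mod (in_var_ideal A) 'X_i.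
Proof.
move=> iNA p Ip m mA; rewrite -(mcoeffMX p U_(i) m) mulrC; apply: Ip => a aA.
rewrite mnmDE mnm1E mA // addn0; case: eqP => // ia.
by rewrite ia aA in iNA.
Qed.

Lemma in_var_idealU1P i A p :
  in_var_ideal (i |: A) p <-> add_principal (in_var_ideal A) 'X_i p.
Proof.
split=> [Ip | [a Ia] m mA]; last first.
  rewrite -(subrK ('X_i * a) p) mcoeffD (in_var_idealXM a (setU11 i A) mA).
  by rewrite Ia ?addr0 // => j jA; apply: mA; rewrite setU1r.
(* Divide by [x_i] the terms of [p] that contain it. *)
exists (\sum_(m <- msupp p | (0 < m i)%N) p@_m *: 'X_[m - U_(i)]).
have -> : 'X_i * (\sum_(m <- msupp p | (0 < m i)%N) p@_m *: 'X_[m - U_(i)])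
    = \sum_(m <- msupp p | (0 < m i)%N) p@_m *: 'X_[m].
  rewrite mulr_sumr; apply: eq_bigr => m mi.
  rewrite -scalerAr -mpolyXD addmC submK //.
  by apply/mnm_lepP => j; rewrite mnm1E; case: eqP => [<-|].
rewrite {1}(mpolyE p) (bigID (fun m => (0 < m i)%N)) /= addrAC subrr add0r.
move=> m' m'A; rewrite raddf_sum /= big1_seq // => m /andP[mi _].
rewrite mcoeffZ mcoeffX; case: eqP => [mm'|]; last by rewrite mulr0.
rewrite mm' Ip ?mul0r // => a /setU1P[->|]; last exact: m'A.
by move: mi; rewrite mm' lt0n negbK => /eqP.
Qed.

Lemma regular_seq_var_ideal (s : seq 'I_n) A (Q : {mpoly R[n]} -> Prop) :
  uniq s -> {in s, forall j, j \notin A} -> (forall p, Q p <-> in_var_ideal A p) ->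
  regular_seq Q [seq 'X_j | j <- s].
Proof.
elim: s A Q => [|i s IH] A Q //= /andP[iNs s_uniq] sNA QE; split.
  by move=> p /QE/(regular_mod_var_ideal (sNA i (mem_head i s)))/QE.
apply: (IH (i |: A)) => // [j js | p].
  rewrite !inE negb_or sNA ?inE ?js ?orbT // andbT.
  by apply: contraNneq iNs => <-.
rewrite in_var_idealU1P; split=> -[a Qa]; exists a; exact/QE.
Qed.

Lemma regular_seq_mpolyX (s : seq 'I_n) :
  uniq s -> regular_seq (fun p : {mpoly R[n]} => p = 0) [seq 'X_j | j <- s].
Proof.
move=> s_uniq; apply: (regular_seq_var_ideal s_uniq (A := set0)) => [j _|p].
  by rewrite inE.
by rewrite in_var_ideal0.
Qed.

End VariableIdeal.

Lemma is_ideal_in_ideal_gen (R : comNzRingType) m (g : 'I_m -> R) :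
  is_ideal (in_ideal_gen g).
Proof.
split.
- by exists (fun=> 0); rewrite big1 // => i _; rewrite mul0r.
- move=> _ _ [c ->] [c' ->]; exists (fun i => c i + c' i).
  by rewrite -big_split; apply: eq_bigr => i _; rewrite mulrDl.
- move=> a _ [c ->]; exists (fun i => a * c i).
  by rewrite mulr_sumr; apply: eq_bigr => i _; rewrite mulrA.
Qed.

Lemma in_ideal_gen_gen (R : comNzRingType) m (g : 'I_m -> R) i : in_ideal_gen g (g i).
Proof.
exists (fun j => (j == i)%:R); rewrite (bigD1 i) //= eqxx mul1r big1 ?addr0 //.
by move=> j /negbTE ->; rewrite mul0r.
Qed.

Section NeighbourhoodIdeal.
Variables (k : fieldType) (n : nat) (e : rel 'I_n).
Implicit Types (A B S : {set 'I_n}).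

Definition mnm_of_set A : 'X_{1..n} := (\sum_(j in A) U_(j))%MM.

Lemma mnm_of_setE A j : mnm_of_set A j = (j \in A).
Proof.
rewrite mnm_sumE; case: (boolP (j \in A)) => jA.
  rewrite (bigD1 j) //= mnm1E eqxx big1 // => i /andP[_ ij].
  by rewrite mnm1E (negbTE ij).
by rewrite big1 // => i iA; rewrite mnm1E; case: eqP => // ij; rewrite -ij iA in jA.
Qed.

Lemma mnm_of_set_le A B : (mnm_of_set A <= mnm_of_set B)%MM = (A \subset B).
Proof.
apply/mnm_lepP/subsetP => [le_AB j jA | sub_AB j]; last first.
  by rewrite !mnm_of_setE; case: (boolP (j \in A)) => // /sub_AB ->.
by have := le_AB j; rewrite !mnm_of_setE jA; case: (j \in B).
Qed.

Lemma nbhd_monomialE x :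
  nbhd_monomial k e x = 'X_[mnm_of_set (closed_nbhd e x)].
Proof. by rewrite /nbhd_monomial (big_morph _ (@mpolyXD _ _) (@mpolyX0 _ _)). Qed.

Lemma in_NI_mnm_of_setP A :
  in_NI e ('X_[mnm_of_set A] : {mpoly k[n]}) <-> exists x, closed_nbhd e x \subset A.
Proof.
split=> [[c cE] | [x sub_xA]]; last first.
  rewrite -mnm_of_set_le in sub_xA; rewrite -(submK sub_xA) mpolyXD -nbhd_monomialE.
  exact/(idealMl (is_ideal_in_ideal_gen _))/in_ideal_gen_gen.
apply/existsP; apply: contraT => /existsPn noN.
have := congr1 (mcoeff (mnm_of_set A)) cE; rewrite mcoeffX eqxx raddf_sum /=.
rewrite big1 => [/eqP|x _]; first by rewrite oner_eq0.
by rewrite nbhd_monomialE mcoeffMX_eq0 // mnm_of_set_le noN.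
Qed.

Lemma dominating_not_in_NI S :
  dominating e S -> ~ in_NI e ('X_[mnm_of_set (~: S)] : {mpoly k[n]}).
Proof.
move=> /forallP domS /in_NI_mnm_of_setP[x].
by rewrite subsets_disjoint setCK disjoint_sym -setI_eq0 (negbTE (domS x)).
Qed.

Lemma minimal_dominating_mulX_in_NI S s : minimal_dominating e S -> s \in S ->
  in_NI e ('X_s * 'X_[mnm_of_set (~: S)] : {mpoly k[n]}).
Proof.
case/andP=> _ /forallP minS sS.
have /forallPn[x] := implyP (minS (S :\ s)) (properD1 sS).
rewrite negbK setI_eq0 disjoint_sym -[S :\ s]setCK -subsets_disjoint => sub_x.
have -> : 'X_s * 'X_[mnm_of_set (~: S)] = 'X_[mnm_of_set (~: (S :\ s))] :> {mpoly k[n]}.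
  rewrite -mpolyXD; congr 'X_[_]; apply/mnmP => j.
  rewrite mnmDE mnm1E !mnm_of_setE !inE [s == j]eq_sym.
  by case: (eqVneq j s) => [->|]; rewrite ?sS.
by apply/in_NI_mnm_of_setP; exists x.
Qed.

End NeighbourhoodIdeal.

Theorem corollary2p4 (k : fieldType) (n : nat) (e : rel 'I_n) :
  (0 < n)%N -> simple_graph e ->
  forall p : nat,
    free_resolution_of_length (@in_NI k n e) p -> (gamma' e <= p)%N.
Proof.
move=> _ _ p [b [d [aug [b_vanish [v0 v0_lift1] exact0 exact]]]].
apply/bigmax_leqP => S minS.
have liftP := boundary_scale_liftP (is_ideal_in_ideal_gen _) v0_lift1 exact0.
have b_pos : (0 < b #|S|)%N.
  rewrite cardE -(size_map (fun j => 'X_j : {mpoly k[n]})).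
  apply: (resolution_length_regular_seq (u := 'X_[mnm_of_set (~: S)] *: v0)
           (regular_seq_mpolyX _ (enum_uniq _)) exact).
    move=> y /mapP[s]; rewrite mem_enum => sS ->.
    by rewrite scalerA; apply/liftP; apply: minimal_dominating_mulX_in_NI.
  by move/liftP; apply: dominating_not_in_NI; case/andP: minS.
by rewrite leqNgt; apply: contraTN b_pos => /b_vanish ->.
Qed.
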